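(* Let $E$ be a uniformly convex Banach space. For every $\varepsilon>0$ there is $\delta>0$ such that for all continuous isometric linear representations $\rho:\mathbb{R}\to\mathrm{O}(E)$, all $a\in\mathbb{R}$ and all $\xi\in E$: if $\|\rho(\gamma_a)\xi\|\ge(1-\delta)\|\xi\|$, then $\max_{|t|\le e^a}\|\rho(t)\xi-\xi\|\le\varepsilon\|\xi\|$.
   Context: $\gamma_a$ is the centered Gaussian probability measure on $\mathbb{R}$ with variance $e^{2a}$, and $\rho(\gamma_a)\xi=\int\rho(t)\xi\,d\gamma_a(t)$. $\mathrm{O}(E)$ is the group of linear isometries of $E$. Uniform convexity: for each $\varepsilon\in(0,2]$ there is $\delta>0$ with $\|(\xi+\eta)/2\|\le1-\delta$ for unit vectors with $\|\xi-\eta\|\ge\varepsilon$. *)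

From HB Require Import structures.
From mathcomp Require Import all_boot all_order all_algebra.
From mathcomp Require Import all_classical all_reals all_analysis.
Set Implicit Arguments. Unset Strict Implicit. Unset Printing Implicit Defensive.
Import Order.TTheory GRing.Theory Num.Theory.
Import numFieldNormedType.Exports.
Local Open Scope classical_set_scope.
Local Open Scope ring_scope.

Definition uniformly_convex {R : realType} (E : normedModType R) : Prop :=
  forall eps : R, 0 < eps -> eps <= 2 ->
    exists2 delta : R, 0 < delta &
      forall x y : E, `|x| = 1 -> `|y| = 1 -> eps <= `|x - y| ->
        `|(2^-1) *: (x + y)| <= 1 - delta.

(* rho : R -> O(E) is a continuous isometric linear representation:
   each rho t is a linear isometry of E, rho is a group homomorphism
   (hence each rho t is invertible, i.e. lies in O(E)), and rho is
   continuous (strong operator topology: t |-> rho t xi is continuous). *)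
Definition isometric_rep {R : realType} (E : normedModType R)
    (rho : R -> E -> E) : Prop :=
  [/\ forall t, linear (rho t),
      forall t x, `|rho t x| = `|x|,
      forall x, rho 0 x = x,
      forall s t x, rho (s + t) x = rho s (rho t x)
    & forall x, continuous (fun t => rho t x)].

(* gamma_a : centered Gaussian probability measure on R with variance
   e^(2a), i.e. standard deviation e^a. *)
Definition gamma {R : realType} (a : R) := normal_prob 0 (expR a).

(* v is the (E-valued) integral of f against gamma_a, characterised weakly:
   every continuous linear functional commutes with the integral.  For a
   bounded continuous f (as t |-> rho t xi) the Bochner integral
   int f d gamma_a exists and satisfies this; by Hahn-Banach it is the
   unique such vector. *)
Definition gauss_integral_of {R : realType} (E : normedModType R)
    (a : R) (f : R -> E) (v : E) : Prop :=
  forall l : E -> R, linear (l : E -> R^o) -> continuous l ->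
    (\int[gamma a]_t (l (f t))%:E)%E = (l v)%:E.

From HB Require Import structures.
From mathcomp Require Import all_boot all_order all_algebra.
From mathcomp Require Import all_classical all_reals all_analysis.
From mathcomp Require Import measurable_realfun.
From mathcomp.algebra_tactics Require Import ring lra.
Set Implicit Arguments.
Unset Strict Implicit.
Unset Printing Implicit Defensive.

Import Order.TTheory GRing.Theory Num.Theory.
Import numFieldNormedType.Exports.
Local Open Scope classical_set_scope.
Local Open Scope ring_scope.

(** Let [l] be a norming functional of [v] (Hahn-Banach) and
    [f s := l (rho s xi)], so that [|f| <= |xi|] and, by the weak definition of
    [v], [int f d(gamma_a) = |v| >= (1 - delta) |xi|].  By Markov's inequality the
    set [B] where [f < (1 - eta) |xi|] has Gaussian measure at most [delta / eta];
    as the Gaussian density is at least [e^-2 / (4 sigma)] on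
    [[-2 sigma, 2 sigma]], [B] meets that interval in Lebesgue measure less than
    [sigma].  Hence for [|t| <= sigma] some [s] has neither [s] nor [s + t] in
    [B]: [l] almost norms both [rho s xi] and [rho (s + t) xi], so their midpoint
    is long and uniform convexity makes them [eps |xi|]-close, while by isometry
    [|rho (s + t) xi - rho s xi| = |rho t xi - xi|]. *)

Section DominatedGraph.
Variables (R : realType) (E : normedModType R).

Record dominated_graph (G : set (E * R)) : Prop := DominatedGraph {
  dgraph_fun : forall x r s, G (x, r) -> G (x, s) -> r = s;
  dgraph_lin : forall a x r y s, G (x, r) -> G (y, s) ->
    G (a *: x + y, a * r + s);
  dgraph_le_norm : forall x r, G (x, r) -> r <= `|x| }.

Section Closure.
Variable G : set (E * R).
Hypothesis dG : dominated_graph G.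

Lemma dgraph0 x r : G (x, r) -> G (0, 0).
Proof.
move=> Gx; have := dgraph_lin dG (-1) Gx Gx.
by rewrite scaleN1r addNr mulN1r addNr.
Qed.

Lemma dgraphZ a x r : G (x, r) -> G (a *: x, a * r).
Proof. by move=> Gx; have := dgraph_lin dG a Gx (dgraph0 Gx); rewrite !addr0. Qed.

Lemma dgraphB x r y s : G (x, r) -> G (y, s) -> G (x - y, r - s).
Proof.
move=> Gx Gy; have := dgraph_lin dG (-1) Gy Gx.
by rewrite scaleN1r mulN1r (addrC (- y)) (addrC (- s)).
Qed.

End Closure.

Lemma dominated_graph_bigcup (F : set (set (E * R))) :
  F `<=` dominated_graph -> total_on F subset ->
  dominated_graph (\bigcup_(X in F) X).
Proof.
move=> Fd Ftot.
have common p q : (\bigcup_(X in F) X) p -> (\bigcup_(X in F) X) q ->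
    exists2 X, F X & X p /\ X q.
  move=> [X FX Xp] [Y FY Yq]; have [XY|YX] := Ftot X Y FX FY.
  - by exists Y => //; split => //; exact: XY.
  - by exists X => //; split => //; exact: YX.
split.
- move=> x r s Gr Gs; have [X /Fd dX [Xr Xs]] := common _ _ Gr Gs.
  exact: (dgraph_fun dX Xr Xs).
- move=> a x r y s Gr Gs; have [X FX [Xr Xs]] := common _ _ Gr Gs.
  by exists X => //; exact: (dgraph_lin (Fd _ FX) a Xr Xs).
- by move=> x r [X FX Xr]; exact: (dgraph_le_norm (Fd _ FX) Xr).
Qed.

Lemma dominated_graph_line (v : E) :
  dominated_graph [set p | exists t : R, p = (t *: v, t * `|v|)].
Proof.
split.
- move=> x r s [t [-> ->]] [t' [vt ->]].
  have [->|v0] := eqVneq v 0; first by rewrite normr0 !mulr0.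
  have : (t - t') *: v == 0 by rewrite scalerBl vt subrr.
  by rewrite scaler_eq0 (negPf v0) orbF subr_eq0 => /eqP ->.
- move=> a x r y s [t [-> ->]] [t' [-> ->]]; exists (a * t + t').
  by rewrite scalerDl scalerA mulrDl mulrA.
- by move=> x r [t [-> ->]]; rewrite normrZ ler_wpM2r // ler_norm.
Qed.

Lemma dominated_graph_adjoin (A : set (E * R)) (x0 : E) (c : R) :
  dominated_graph A -> ~ (exists r, A (x0, r)) ->
  (forall x r, A (x, r) -> r - `|x - x0| <= c /\ c <= `|x + x0| - r) ->
  dominated_graph
    [set p | exists x r t, A (x, r) /\ p = (x + t *: x0, r + t * c)].
Proof.
move=> dA x0A cA; split.
- move=> _ _ s [x1 [r1 [t1 [A1 [-> ->]]]]] [x2 [r2 [t2 [A2 [e ->]]]]].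
  have t12 : t1 = t2.
    apply/eqP; apply: contraT => t12; case: x0A.
    exists ((t2 - t1)^-1 * (r1 - r2)).
    have x12 : x1 - x2 = (t2 - t1) *: x0.
      by rewrite -[x1](addrK (t1 *: x0)) e scalerBl addrAC [x2 + _]addrC addrK.
    have -> : x0 = (t2 - t1)^-1 *: (x1 - x2).
      by rewrite x12 scalerA mulVf ?scale1r // subr_eq0 eq_sym.
    exact/(dgraphZ dA)/(dgraphB dA).
  move: e; rewrite -t12 => /addIr x12; move: A2; rewrite -x12 => A2.
  by rewrite (dgraph_fun dA A1 A2).
- move=> a _ _ _ _ [x1 [r1 [t1 [A1 [-> ->]]]]] [x2 [r2 [t2 [A2 [-> ->]]]]].
  exists (a *: x1 + x2), (a * r1 + r2), (a * t1 + t2).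
  split; first exact: (dgraph_lin dA a A1 A2).
  by rewrite scalerDr scalerA addrACA -scalerDl mulrDr mulrA addrACA -mulrDl.
- move=> _ _ [x [r [t [Ax [-> ->]]]]].
  have [t_lt0|t_gt0|->] := ltgtP t 0; last first.
  + by rewrite scale0r mul0r !addr0; exact: (dgraph_le_norm dA Ax).
  + have [_ c_le] := cA _ _ (dgraphZ dA t^-1 Ax).
    have : t * c <= t * (`|t^-1 *: x + x0| - t^-1 * r) by rewrite ler_pM2l.
    rewrite mulrBr mulrA mulfV ?gt_eqF // mul1r.
    rewrite -[X in X * `|_|](gtr0_norm t_gt0) -normrZ scalerDr scalerA.
    rewrite mulfV ?gt_eqF // scale1r; lra.
  + have nt_gt0 : 0 < - t by rewrite oppr_gt0.
    have [c_ge _] := cA _ _ (dgraphZ dA (- t)^-1 Ax).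
    have : - t * ((- t)^-1 * r - `|(- t)^-1 *: x - x0|) <= - t * c.
      by rewrite ler_pM2l.
    rewrite mulrBr mulrA mulfV ?gt_eqF // mul1r.
    rewrite -[X in X * `|_|](gtr0_norm nt_gt0) -normrZ scalerBr scalerA.
    rewrite mulfV ?gt_eqF // scale1r scaleNr opprK; lra.
Qed.

Lemma dominated_graph_extend (A : set (E * R)) (x0 : E) :
  dominated_graph A -> A (0, 0) -> ~ (exists r, A (x0, r)) ->
  exists2 B, A `<` B & dominated_graph B.
Proof.
move=> dA A00 x0A.
pose S := [set p.2 - `|p.1 - x0| | p in A].
have S_le x r : A (x, r) -> ubound S (`|x + x0| - r).
  move=> Ax _ [[y s] Ay <-] /=.
  have := dgraph_le_norm dA (dgraph_lin dA 1 Ax Ay); rewrite scale1r mul1r.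
  have -> : x + y = (x + x0) + (y - x0) by rewrite addrACA subrr addr0.
  have := ler_normD (x + x0) (y - x0); lra.
have S0 : S !=set0 by exists (0 - `|0 - x0|), (0, 0).
have supS : has_sup S by split=> //; exists (`|0 + x0| - 0); exact: S_le.
exists [set p | exists x r t, A (x, r) /\ p = (x + t *: x0, r + t * sup S)].
  split=> [[x r] Ax|AB]; first by exists x, r, 0; rewrite scale0r mul0r !addr0.
  apply: x0A; exists (sup S); apply: AB.
  by exists 0, 0, 1; rewrite scale1r mul1r !add0r.
apply: dominated_graph_adjoin => // x r Ax; split.
  by apply: sup_upper_bound => //; exists (x, r).
exact: ge_sup S0 (S_le _ _ Ax).
Qed.

Lemma norming_functional (v : E) :
  exists2 l : {linear E -> R^o}, (forall x, `|l x| <= `|x|) & l v = `|v|.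
Proof.
(* The [set0] alternative admits the union of the empty chain in Zorn's lemma. *)
pose P G := dominated_graph G /\ (G = set0 \/ G (v, `|v|)).
have [A [[dA Av] Amax]] : exists A, P A /\ forall B, A `<` B -> ~ P B.
  apply: Zorn_bigcup => F FP Ftot; split.
    by apply: dominated_graph_bigcup Ftot => G /FP[].
  have [[X FX Xv]|noX] := pselect (exists2 X, F X & X (v, `|v|)).
    by right; exists X.
  left; apply/seteqP; split=> // p [X FX Xp]; have [_ [X0|Xv]] := FP X FX.
    by rewrite X0 in Xp.
  by case: noX; exists X.
have {}Av : A (v, `|v|).
  have line_v : [set p | exists t : R, p = (t *: v, t * `|v|)] (v, `|v|).
    by exists 1; rewrite scale1r mul1r.
  case: Av => // A0; exfalso.
  apply: (Amax [set p | exists t, p = (t *: v, t * `|v|)]).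
    by rewrite A0; split=> // /(_ _ line_v).
  by split; [exact: dominated_graph_line | right].
have dom x : exists r, A (x, r).
  apply: contrapT => xA.
  have [B AB dB] := dominated_graph_extend dA (dgraph0 dA Av) xA.
  by apply: (Amax B AB); split=> //; right; exact: (properW AB).
have [l Al] := choice dom.
have l_lin : linear (l : E -> R^o).
  by move=> a x y; exact: (dgraph_fun dA (Al _) (dgraph_lin dA a (Al x) (Al y))).
pose L : {linear E -> R^o} := HB.pack l (GRing.isLinear.Build _ _ _ _ l l_lin).
exists L => /= [x|].
  rewrite ler_norml (dgraph_le_norm dA (Al x)) andbT lerNl.
  have := dgraph_le_norm dA (dgraphZ dA (-1) (Al x)).
  by rewrite scaleN1r normrN mulN1r.
exact: (dgraph_fun dA (Al v) Av).
Qed.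

End DominatedGraph.

Lemma continuous_linear_le_norm (R : realType) (E : normedModType R)
    (l : {linear E -> R^o}) :
  (forall x, `|l x| <= `|x|) -> continuous l.
Proof.
move=> l_le; apply/bounded_linear_continuous/linear_boundedP.
near=> k => x; apply: le_trans (l_le x) _; rewrite ler_peMl //.
Unshelve. all: by end_near. Qed.

Lemma linear_isometry_distE (R : realType) (E : normedModType R) (f : E -> E) :
  linear f -> (forall x, `|f x| = `|x|) -> forall x y, `|f x - f y| = `|x - y|.
Proof.
move=> f_lin f_iso x y.
pose F : {linear E -> E} := HB.pack f (GRing.isLinear.Build _ _ _ _ f f_lin).
by rewrite -[f x]/(F x) -[f y]/(F y) -linearB f_iso.
Qed.

Section GaussianMass.
Variable R : realType.
Local Notation mu := (@lebesgue_measure R).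

Lemma lebesgue_measure_shift (t : R) (A : set R) : measurable A ->
  mu ((fun x => x + t) @^-1` A) = mu A.
Proof.
move=> mA.
have mshift : measurable_fun [set: measurableTypeR R]
    ((fun x => x + t) : _ -> measurableTypeR R) by exact: measurable_funD.
change (pushforward mu ((fun x => x + t) : _ -> measurableTypeR R) A = mu A).
apply/esym/lebesgue_measure_unique => //= _ [[a b]] _ <-; rewrite /pushforward.
have -> : (fun x => x + t) @^-1` `]a, b]%classic = `]a - t, b - t]%classic.
  by apply/seteqP; split=> y /=; rewrite !in_itv /= !lerBrDr !ltrBlDr.
rewrite !lebesgue_measure_itv /= !lte_fin ltrD2r.
by case: ifP => // _; rewrite -EFinB; congr EFin; ring.
Qed.

Lemma exists_shift_pair_notin (A : set R) (s t : R) :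
  measurable A -> (mu A < s%:E)%E ->
  exists x, [/\ `|x| <= s, ~ A x & ~ A (x + t)].
Proof.
move=> mA muA; apply: contrapT => noxs.
have mAt : measurable ((fun x => x + t) @^-1` A).
  by rewrite -[X in measurable X]setTI; apply: measurable_funD.
have s_gt0 : 0 < s by rewrite -lte_fin (le_lt_trans (measure_ge0 _ _) muA).
have cover : `[- s, s] `<=` A `|` (fun x => x + t) @^-1` A.
  move=> x /=; rewrite in_itv /= -ler_norml => xs.
  case: (pselect (A x)) => [|nAx]; [by left | right].
  by apply: contrapT => nAxt; apply: noxs; exists x.
have : (mu `[(- s)%R, s] <= mu A + mu A)%E.
  rewrite -[X in (_ <= _ + X)%E](lebesgue_measure_shift t mA).
  apply: (le_trans _ (measureU2 mu mA mAt)); apply: le_measure => //.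
    by rewrite inE; exact: measurable_itv.
  by rewrite inE; exact: measurableU.
rewrite lebesgue_measure_itv /= lte_fin gtrN // opprK -EFinD => le_ss.
by have := le_lt_trans le_ss (lteD muA muA); rewrite -EFinD ltxx.
Qed.

Lemma normal_pdf_lb (s x : R) : 0 < s -> `|x| <= 2 * s ->
  expR (-2) / (4 * s) <= normal_pdf 0 s x.
Proof.
move=> s_gt0 xs.
rewrite normal_pdfE ?gt_eqF //= /normal_peak /normal_fun subr0.
have pi_lt4 : pi < 4 :> R by have := @pihalf_lt2 R; lra.
have pi_gt0 : 0 < pi :> R := pi_gt0 R.
have s2_gt0 : 0 < s ^+ 2 by rewrite exprn_gt0.
have sqrt_le : Num.sqrt (s ^+ 2 * pi *+ 2) <= 4 * s.
  rewrite -[X in _ <= X](@gtr0_norm _ (4 * s)) ?mulr_gt0 //.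
  rewrite -sqrtr_sqr ler_sqrt ?sqr_ge0 // -mulr_natr; nra.
have sqrt_gt0 : 0 < Num.sqrt (s ^+ 2 * pi *+ 2).
  by rewrite sqrtr_gt0 -mulr_natr; nra.
have exp_ge : expR (-2) <= expR (- x ^+ 2 / (s ^+ 2 *+ 2)).
  rewrite ler_expR -mulr_natr mulNr lerN2 ler_pdivrMr; last by nra.
  have : x ^+ 2 <= (2 * s) ^+ 2.
    by move: xs; rewrite ler_norml => /andP[? ?]; nra.
  nra.
rewrite [leLHS]mulrC; apply: ler_pM => //.
  by rewrite invr_ge0 mulr_ge0 // ltW.
by rewrite lef_pV2 ?posrE // mulr_gt0.
Qed.

Lemma normal_prob_ge_lebesgue (s : R) (A : set R) :
  0 < s -> measurable A -> A `<=` `[- (2 * s), 2 * s] ->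
  ((expR (-2) / (4 * s))%:E * mu A <= normal_prob 0 s A)%E.
Proof.
move=> s_gt0 mA A2s; rewrite -integral_cst //.
apply: ge0_le_integral => //.
- by move=> x _; rewrite lee_fin ltW // divr_gt0 ?expR_gt0 ?mulr_gt0.
- apply/measurable_EFinP; apply: measurable_funTS; exact: measurable_normal_pdf.
- move=> x /A2s; rewrite /= in_itv /= -ler_norml => xs.
  by rewrite lee_fin normal_pdf_lb.
Qed.

End GaussianMass.

Lemma probability_sublevel_le d (T : measurableType d) (R : realType)
    (P : probability T R) (f : T -> R) (N c r : R) :
  measurable_fun setT f -> (forall x, `|f x| <= N) -> c <= N ->
  (\int[P]_x (f x)%:E = r%:E)%E ->
  ((N - c)%:E * P (f @^-1` `]-oo, c[) <= (N - r)%:E)%E.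
Proof.
move=> mf fN cN intf.
have mB : measurable (f @^-1` `]-oo, c[).
  by rewrite -[X in measurable X]setTI; exact: mf.
have f_int : P.-integrable setT (EFin \o f).
  apply: measurable_bounded_integrable => //.
    exact: le_lt_trans (probability_le1 _ measurableT) (ltry _).
  exists N; split; first exact: num_real.
  by move=> M NM x _ /=; exact: le_trans (fN x) (ltW NM).
have intNf : (\int[P]_x (N - f x)%:E = (N - r)%:E)%E.
  under eq_integral do rewrite EFinB.
  rewrite integralB_EFin //; last exact: finite_measure_integrable_cst.
  rewrite intf integral_cst // EFinB -[in RHS](mule1 N%:E).
  by congr (_ * _ - _)%E; exact: probability_setT.
have -> : P (f @^-1` `]-oo, c[) = (\int[P]_x (\1_(f @^-1` `]-oo, c[) x)%:E)%E.
  by rewrite integral_indic // setIT.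
rewrite -intNf -ge0_integralZl //; first last.
- by rewrite lee_fin subr_ge0.
- by apply/measurable_EFinP; exact: measurable_indic.
apply: ge0_le_integral => //.
- by move=> x _; rewrite -EFinM lee_fin mulr_ge0 ?subr_ge0.
- by apply/measurable_EFinP; apply: measurable_funM => //;
    exact: measurable_indic.
- by apply/measurable_EFinP; apply: measurable_funB.
- move=> x _; rewrite -EFinM lee_fin indicE.
  have := le_trans (ler_norm (f x)) (fN x).
  case: (pselect ((f @^-1` `]-oo, c[) x)) => [fxc|nfxc].
    by rewrite mem_set // mulr1; move: fxc; rewrite /= in_itv /=; lra.
  by rewrite memNset // mulr0; lra.
Qed.

Lemma normal_shift_pair (R : realType) (s N eta delta r t : R) (f : R -> R) :
  0 < s -> 0 < eta -> delta <= eta * expR (-2) / 8 ->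
  measurable_fun setT f -> (forall x, `|f x| <= N) ->
  (\int[normal_prob 0 s]_x (f x)%:E = r%:E)%E -> (1 - delta) * N <= r ->
  `|t| <= s ->
  exists x, (1 - eta) * N <= f x /\ (1 - eta) * N <= f (x + t).
Proof.
move=> s_gt0 eta_gt0 delta_le mf fN intf r_ge t_le.
have : 0 <= N := le_trans (normr_ge0 _) (fN 0).
rewrite le_eqVlt => /predU1P[N0|N_gt0].
  have f0 x : f x = 0 by apply/eqP; rewrite -normr_le0 N0.
  by exists 0; rewrite !f0 -N0 mulr0.
pose B := f @^-1` `]-oo, (1 - eta) * N[.
pose I := `[- (2 * s), 2 * s]%classic.
have mB : measurable B by rewrite -[X in measurable X]setTI; exact: mf.
have mBI : measurable (B `&` I).
  by apply: measurableI => //; exact: measurable_itv.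
pose k := expR (-2) / (4 * s).
have k_gt0 : 0 < k by rewrite divr_gt0 ?expR_gt0 ?mulr_gt0.
have markov : ((eta * N)%:E * normal_prob 0 s B <= (delta * N)%:E)%E.
  have cN : (1 - eta) * N <= N by nra.
  have := probability_sublevel_le (P := normal_prob 0 s) mf fN cN intf.
  rewrite (_ : N - (1 - eta) * N = eta * N); last by ring.
  by move/le_trans; apply; rewrite lee_fin; lra.
have lebesgue_BI :
    ((eta * N * k)%:E * lebesgue_measure (B `&` I) <= (delta * N)%:E)%E.
  rewrite EFinM -muleA; apply: le_trans markov.
  apply: lee_wpmul2l; first by rewrite lee_fin mulr_ge0 // ltW.
  apply: le_trans (normal_prob_ge_lebesgue s_gt0 mBI (@subIsetr _ B I)) _.
  by apply: le_measure; rewrite ?inE //; exact: subIsetl.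
have [x [xs nBx nBxt]] :
    exists x, [/\ `|x| <= s, ~ (B `&` I) x & ~ (B `&` I) (x + t)].
  apply: exists_shift_pair_notin => //.
  have etaNk_gt0 : 0 < eta * N * k by do 2!apply: mulr_gt0 => //.
  rewrite -(@lte_pmul2l _ (eta * N * k)%:E) ?lte_fin //.
  apply: le_lt_trans lebesgue_BI _; rewrite -EFinM lte_fin.
  have -> : eta * N * k * s = eta * expR (-2) / 4 * N by rewrite /k; field; lra.
  have : delta * N <= eta * expR (-2) / 8 * N by rewrite ler_wpM2r // ltW.
  have : 0 < eta * expR (-2) * N by rewrite !mulr_gt0 ?expR_gt0.
  lra.
have inI y : `|y| <= 2 * s -> I y by rewrite /I /= in_itv /= -ler_norml.
exists x; split; rewrite leNgt; apply/negP => fx.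
  by apply: nBx; split; [rewrite /B /= in_itv | apply: inI; lra].
apply: nBxt; split; first by rewrite /B /= in_itv.
by apply: inI; apply: le_trans (ler_normD _ _) _; lra.
Qed.

Lemma uniformly_convex_norming_close (R : realType) (E : normedModType R) :
  uniformly_convex E -> forall eps, 0 < eps ->
  exists2 eta, 0 < eta & forall (l : {linear E -> R^o}) (x y : E),
    (forall z, l z <= `|z|) -> `|x| = `|y| ->
    (1 - eta) * `|x| <= l x -> (1 - eta) * `|x| <= l y ->
    `|x - y| <= eps * `|x|.
Proof.
move=> UC eps eps_gt0.
have e_gt0 : 0 < Num.min eps 2 by rewrite lt_min eps_gt0 /=.
have e_le2 : Num.min eps 2 <= 2 by rewrite ge_min lexx orbT.
have [du du_gt0 UCdu] := UC _ e_gt0 e_le2.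
exists (du / 2) => [|l x y l_le xy lx ly]; first by rewrite divr_gt0.
have [x0|x_neq0] := eqVneq x 0.
  move: xy; rewrite x0 normr0 => /esym/normr0_eq0 ->.
  by rewrite subr0 normr0 mulr0.
have N_gt0 : 0 < `|x| by rewrite normr_gt0.
pose u := `|x|^-1 *: x; pose w := `|x|^-1 *: y.
have unit_u : `|u| = 1 by rewrite normrZ gtr0_norm ?invr_gt0 // mulVf ?gt_eqF.
have unit_w : `|w| = 1 by rewrite normrZ gtr0_norm ?invr_gt0 // -xy mulVf ?gt_eqF.
rewrite leNgt; apply/negP => far.
have uw_far : Num.min eps 2 <= `|u - w|.
  rewrite -scalerBr normrZ gtr0_norm ?invr_gt0 // ge_min; apply/orP; left.
  by rewrite -(ler_pM2l N_gt0) mulrA mulfV ?gt_eqF // mul1r mulrC ltW.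
have lmid : l (2^-1 *: (u + w)) = 2^-1 * (`|x|^-1 * l x + `|x|^-1 * l y).
  by rewrite linearZ linearD !linearZ.
have lu : 1 - du / 2 <= `|x|^-1 * l x by rewrite ler_pdivlMl // mulrC.
have lw : 1 - du / 2 <= `|x|^-1 * l y by rewrite ler_pdivlMl // mulrC.
have mid_long : 1 - du / 2 <= l (2^-1 *: (u + w)) by rewrite lmid; lra.
have := le_trans mid_long (l_le _); have := UCdu u w unit_u unit_w uw_far.
lra.
Qed.

Theorem proposition3p3 (R : realType) (E : completeNormedModType R) :
  uniformly_convex E ->
  forall eps : R, 0 < eps ->
  exists2 delta : R, 0 < delta &
    forall (rho : R -> E -> E), isometric_rep rho ->
    forall (a : R) (xi v : E), gauss_integral_of a (fun t => rho t xi) v ->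
      (1 - delta) * `|xi| <= `|v| ->
      forall t : R, `|t| <= expR a -> `|rho t xi - xi| <= eps * `|xi|.
Proof.
move=> UC eps eps_gt0.
have [eta eta_gt0 near_norming] := uniformly_convex_norming_close UC eps_gt0.
exists (eta * expR (-2) / 8) => [|rho [rho_lin rho_iso _ rhoD rho_cont]].
  by rewrite divr_gt0 // mulr_gt0 // expR_gt0.
move=> a xi v xi_v v_ge t t_le.
have [l l_le lv] := norming_functional v.
have l_cont := continuous_linear_le_norm l_le.
have f_meas : measurable_fun setT (fun s => l (rho s xi)).
  apply: continuous_measurable_fun => s.
  exact: continuous_comp (rho_cont xi s) (l_cont _).
have f_le s : `|l (rho s xi)| <= `|xi| by rewrite -(rho_iso s xi).
have lv_ge : (1 - eta * expR (-2) / 8) * `|xi| <= l v by rewrite lv.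
have [s [l_s l_st]] := normal_shift_pair (expR_gt0 a) eta_gt0 (lexx _) f_meas f_le
  (xi_v l (@linearP _ _ _ _ l) l_cont) lv_ge t_le.
have l_le' z : l z <= `|z| := le_trans (ler_norm _) (l_le z).
have := near_norming l (rho (s + t) xi) (rho s xi) l_le'.
rewrite !rho_iso rhoD linear_isometry_distE //; apply=> //.
by rewrite -rhoD.
Qed.
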